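(* In the Ewens setting: - $W(N,0)=(N-1)!\,\theta$ for all $N\ge1$; - for all $N\ge2$ and $1\le k\le N-1$, $$W(N,k)=\theta\,[k]_\theta\,\frac{(N-1)!}{(k-1)!}\sum_{i=k}^{N-1}\frac1i.$$
   Context: Permutations of $\{1,\dots,N\}$ are written in one-line notation; $\mathfrak S_N$ is the set of all of them. An entry $\pi_j$ is a left-to-right maximum if $\pi_j>\pi_i$ for all $i<j$; $\mathrm{lrm}(\pi)$ is the number of left-to-right maxima. For $0\le k\le N-1$, a permutation $\pi\in\mathfrak S_N$ is $k$-winnable if the first index $j>k$ such that $\pi_j$ is a left-to-right maximum satisfies $\pi_j=N$. Ewens setting: $W(N,k)=\sum_{k\text{-winnable }\pi\in\mathfrak S_N}\theta^{\mathrm{lrm}(\pi)}$ and $[m]_\theta=\theta(\theta+1)\cdots(\theta+m-1)$, with $[0]_\theta=1$. *)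

(* Permutations of {1..N} are modelled as 'S_N = {perm 'I_N},
   i.e. 0-based positions and 0-based values (value v <-> v+1, position j <-> j+1). *)
From HB Require Import structures.
From mathcomp Require Import all_boot all_order all_algebra all_fingroup.
Set Implicit Arguments. Unset Strict Implicit. Unset Printing Implicit Defensive.
Import Order.TTheory GRing.Theory Num.Theory.
Local Open Scope ring_scope.

Definition is_lrm (N : nat) (s : 'S_N) (j : 'I_N) : bool :=
  [forall i : 'I_N, (i < j)%N ==> (s i < s j)%N].

Definition lrm (N : nat) (s : 'S_N) : nat := #|[set j : 'I_N | is_lrm s j]|.

(* k-winnable: the first (1-based) index j > k, i.e. 0-based index j >= k, at which
   s has a left-to-right maximum exists and carries the maximal value N
   (0-based value N.-1). *)
Definition winnable (N k : nat) (s : 'S_N) : bool :=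
  [exists j : 'I_N,
    [&& (k <= j)%N, is_lrm s j,
        [forall i : 'I_N, ((k <= i) && (i < j))%N ==> ~~ is_lrm s i]
      & (val (s j) == N.-1)%N]].

Definition W (R : numFieldType) (theta : R) (N k : nat) : R :=
  \sum_(s : 'S_N | winnable k s) theta ^+ lrm s.

Definition rising (R : numFieldType) (theta : R) (m : nat) : R :=
  \prod_(i < m) (theta + i%:R).

From HB Require Import structures.
From mathcomp Require Import all_boot all_order all_algebra all_fingroup.
From mathcomp Require Import zify ring.
Import Order.TTheory GRing.Theory Num.Theory.
Local Open Scope ring_scope.

(* Write s in 'S_(n+1) as [lift_perm ord_max v t], v being its last value and
   t the pattern of its first n entries.  Deleting the last entry keeps the
   left-to-right maxima among the first n positions, and the last entry is one
   iff v is the maximum.  With L n k the sum of theta^lrm over the permutations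
   without left-to-right maximum at positions >= k, this gives, for k <= n,
     \sum_('S_(n+1)) theta^lrm = (theta + n) \sum_('S_n) theta^lrm,
     L (n+1) k = n L n k,        W (n+1) k = n W n k + theta L n k,
   the last because s is k-winnable iff either v is not the maximum and t is
   k-winnable, or v is the maximum and t has no left-to-right maximum from k on.
   From L k k = [k]_theta and W k k = 0 we get L n k = [k]_theta (n-1)!/(k-1)!,
   and W n k / (n-1)! grows by theta L n k / n! = theta [k]_theta / ((k-1)! n)
   at each step, whence the harmonic sum. *)

Lemma ltn_bump2 h i j : (bump h i < bump h j)%N = (i < j)%N.
Proof.
rewrite !ltn_neqAle leq_bump2; congr (_ && _).
by rewrite (inj_eq (can_inj (bumpK h))).
Qed.

Lemma bump_eq_pred v x n :
  (v < n)%N -> (x < n)%N -> (bump v x == n) = (x == n.-1).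
Proof. by rewrite /bump; case: leqP => /= *; apply/eqP/eqP; lia. Qed.

Lemma sum_perm_lift_last (R : nmodType) n (F : 'S_n.+1 -> R) :
  \sum_(s : 'S_n.+1) F s =
  \sum_(v : 'I_n.+1) \sum_(t : 'S_n) F (lift_perm ord_max v t).
Proof.
rewrite (partition_big (fun s : 'S_n.+1 => s ord_max) xpredT) //=.
apply: eq_bigr => v _; set i0 : 'I_n.+1 := ord_max.
rewrite (reindex (lift_perm i0 v)); last first.
  (* [ulsf i s] is s with the entry at position i deleted. *)
  pose ulsf i (s : 'S_n.+1) k := odflt k (unlift (s i) (s (lift i k))).
  have ulsfK i (s : 'S_n.+1) k : lift (s i) (ulsf i s k) = s (lift i k).
    rewrite /ulsf; have := neq_lift i k.
    by rewrite -(can_eq (permK s)) => /unlift_some[] ? ? ->.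
  have inj_ulsf : injective (ulsf i0 _).
    move=> s; apply: can_inj (ulsf (s i0) s^-1%g) _ => k'.
    by rewrite {1}/ulsf ulsfK !permK liftK.
  exists (fun s => perm (inj_ulsf s)) => [s _ | s].
    by apply/permP => k'; rewrite permE /ulsf lift_perm_lift lift_perm_id liftK.
  move/(s _ =P _) => si0; apply/permP => k.
  case: (unliftP i0 k) => [k'|] ->; rewrite ?lift_perm_id //.
  by rewrite lift_perm_lift -si0 permE ulsfK.
by apply: eq_bigl => t; rewrite lift_perm_id eqxx.
Qed.

Lemma widen_ord_max_neq n (v : 'I_n) : (widen_ord (leqnSn n) v == ord_max) = false.
Proof. by apply/negbTE; rewrite neq_ltn /= ltn_ord. Qed.

Definition nolrm_from {N} k (s : 'S_N) :=
  [forall i : 'I_N, (k <= i)%N ==> ~~ is_lrm s i].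

Lemma is_lrm_ord0 n (s : 'S_n.+1) : is_lrm s ord0.
Proof. by apply/forallP. Qed.

Lemma lrm_perm0 (s : 'S_0) : lrm s = 0%N.
Proof. by apply/eqP; rewrite cards_eq0; apply/eqP/setP => -[]. Qed.

Section LiftLast.
Variables (n : nat) (v : 'I_n.+1) (t : 'S_n).
Local Notation s := (lift_perm ord_max v t).

Lemma is_lrm_lift_last i : is_lrm s (lift ord_max i) = is_lrm t i.
Proof.
apply/forallP/forallP => lrm_s i'.
  by move: (lrm_s (lift ord_max i')); rewrite !lift_perm_lift !lift_max ltn_bump2.
case: (unliftP ord_max i') => [j|] ->.
  by rewrite !lift_perm_lift !lift_max ltn_bump2; apply: lrm_s.
by apply/implyP; rewrite lift_max /= ltnNge (ltnW (ltn_ord i)).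
Qed.

Lemma is_lrm_last : is_lrm s ord_max = (v == ord_max).
Proof.
apply/forallP/idP => [lrm_s | /eqP v_max i]; last first.
  apply/implyP => lt_i; rewrite lift_perm_id v_max /=.
  have := ltn_ord (s i); rewrite ltnS leq_eqVlt => /orP[/eqP si_n|]; last by rewrite v_max.
  have : s i = s ord_max by apply: val_inj; rewrite /= si_n lift_perm_id v_max.
  by move/perm_inj => i_max; move: lt_i; rewrite i_max ltnn.
apply/eqP/val_inj => /=; apply/eqP; rewrite eqn_leq -ltnS ltn_ord /=.
have [i si_max] : exists i, s i = ord_max by exists (s^-1 ord_max)%g; rewrite permKV.
case: (unliftP ord_max i) si_max => [j|] ->; last by rewrite lift_perm_id => ->.
move=> sj_max; move: (lrm_s (lift ord_max j)).
by rewrite sj_max lift_perm_id lift_max /= ltn_ord /= ltnNge leq_ord.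
Qed.

Lemma lrm_lift_last : lrm s = (lrm t + (v == ord_max))%N.
Proof.
rewrite /lrm -!sum1_card !(big_mkcond (fun j => j \in _)) big_ord_recr /=.
rewrite inE is_lrm_last; congr (_ + _)%N; apply: eq_bigr => i _.
have -> : widen_ord (leqnSn n) i = lift ord_max i.
  by apply: val_inj; rewrite [RHS]lift_max.
by rewrite !inE is_lrm_lift_last.
Qed.

Lemma nolrm_from_lift_last k :
  (k <= n)%N -> nolrm_from k s = (v != ord_max) && nolrm_from k t.
Proof.
move=> le_kn; apply/forallP/andP => [no_s | [v_max no_t] i].
  split; first by move: (no_s ord_max); rewrite is_lrm_last /= le_kn.
  apply/forallP => i; move: (no_s (lift ord_max i)).
  by rewrite is_lrm_lift_last lift_max.
case: (unliftP ord_max i) => [j|] ->; last by rewrite is_lrm_last; apply/implyP.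
by rewrite is_lrm_lift_last lift_max; apply: (forallP no_t j).
Qed.

Lemma winnable_lift_last_max k :
  (k <= n)%N -> v = ord_max -> winnable k s = nolrm_from k t.
Proof.
move=> le_kn v_max; apply/existsP/idP => [[j /and4P[_ _ no_lrm_before sj_n]] | no_t].
  have j_max : j = ord_max.
    by apply: (@perm_inj _ s); apply: val_inj; rewrite /= (eqP sj_n) lift_perm_id v_max.
  rewrite {}j_max in no_lrm_before.
  apply/forallP => i; apply/implyP => le_ki.
  move: (forallP no_lrm_before (lift ord_max i)).
  by rewrite is_lrm_lift_last lift_max le_ki ltn_ord.
exists ord_max; apply/and4P; split=> //; first by rewrite is_lrm_last v_max.
  apply/forallP => i; apply/implyP => /andP[le_ki lt_i].
  case: (unliftP ord_max i) le_ki lt_i => [j|] ->; last by rewrite ltnn.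
  by rewrite is_lrm_lift_last lift_max => le_kj _; apply: (implyP (forallP no_t j)).
by rewrite lift_perm_id v_max.
Qed.

Lemma winnable_lift_last_lt k :
  (k <= n)%N -> (v < n)%N -> winnable k s = winnable k t.
Proof.
move=> le_kn lt_vn.
apply/existsP/existsP => [[j /and4P[le_kj lrm_j no_lrm_before sj_n]] |
                          [j /and4P[le_kj lrm_j no_lrm_before tj_n]]].
  case: (unliftP ord_max j) le_kj lrm_j no_lrm_before sj_n => [j'|] ->; last first.
    by rewrite is_lrm_last -(inj_eq val_inj) /= ltn_eqF.
  rewrite is_lrm_lift_last lift_max => le_kj lrm_j no_lrm_before sj_n.
  exists j'; apply/and4P; split=> //; last first.
    by move: sj_n; rewrite lift_perm_lift /= bump_eq_pred.
  apply/forallP => i; apply/implyP => lt_i.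
  move: (implyP (forallP no_lrm_before (lift ord_max i))).
  by rewrite is_lrm_lift_last !lift_max; apply.
exists (lift ord_max j); apply/and4P; split.
- by rewrite lift_max.
- by rewrite is_lrm_lift_last.
- apply/forallP => i; apply/implyP => /andP[le_ki lt_i].
  case: (unliftP ord_max i) le_ki lt_i => [i'|] ->; last first.
    by rewrite !lift_max => _; rewrite ltnNge (ltnW (ltn_ord j)).
  rewrite is_lrm_lift_last !lift_max => le_ki lt_i.
  by apply: (implyP (forallP no_lrm_before i')); rewrite le_ki lt_i.
- by rewrite lift_perm_lift /= bump_eq_pred.
Qed.
End LiftLast.

Section Recurrences.
Variables (R : numFieldType) (theta : R).

Definition lrm_sum N := \sum_(s : 'S_N) theta ^+ lrm s.

Definition nolrm_sum N k := \sum_(s : 'S_N | nolrm_from k s) theta ^+ lrm s.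

Lemma sum_lrm_split_last n (P : 'S_n.+1 -> bool) :
  \sum_(s | P s) theta ^+ lrm s =
    \sum_(v < n) \sum_(t : 'S_n | P (lift_perm ord_max (widen_ord (leqnSn n) v) t))
       theta ^+ lrm t
  + theta * \sum_(t : 'S_n | P (lift_perm ord_max ord_max t)) theta ^+ lrm t.
Proof.
rewrite big_mkcond sum_perm_lift_last big_ord_recr /= mulr_sumr; congr (_ + _).
  apply: eq_bigr => v _; rewrite [RHS]big_mkcond; apply: eq_bigr => t _.
  by rewrite lrm_lift_last widen_ord_max_neq addn0.
rewrite [RHS]big_mkcond; apply: eq_bigr => t _.
by rewrite lrm_lift_last eqxx addn1 exprS; case: (P _); rewrite ?mulr0.
Qed.

Lemma lrm_sumS n : lrm_sum n.+1 = (theta + n%:R) * lrm_sum n.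
Proof.
rewrite /lrm_sum sum_lrm_split_last; under eq_bigr do rewrite big_mkcond /=.
by rewrite sumr_const card_ord mulrDl addrC mulr_natl.
Qed.

Lemma lrm_sum_rising n : lrm_sum n = rising theta n.
Proof.
elim: n => [|n IHn]; last by rewrite lrm_sumS IHn /rising big_ord_recr /= mulrC.
rewrite /lrm_sum /rising big_ord0.
by under eq_bigr do rewrite lrm_perm0 expr0; rewrite sumr_const card_Sn.
Qed.

Lemma nolrm_sumS n k : (k <= n)%N -> nolrm_sum n.+1 k = n%:R * nolrm_sum n k.
Proof.
move=> le_kn; rewrite /nolrm_sum sum_lrm_split_last.
rewrite [X in _ + _ * X]big_pred0 ?mulr0 ?addr0; last first.
  by move=> t; rewrite nolrm_from_lift_last // eqxx.
under eq_bigr do under eq_bigl do rewrite nolrm_from_lift_last // widen_ord_max_neq.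
by rewrite sumr_const card_ord mulr_natl.
Qed.

Lemma nolrm_sum_diag k : nolrm_sum k k = lrm_sum k.
Proof.
apply: eq_bigl => s; apply/forallP => i; apply/implyP => le_ki.
by move: (leq_trans (ltn_ord i) le_ki); rewrite ltnn.
Qed.

Lemma nolrm_sum_0 n : nolrm_sum n.+1 0 = 0.
Proof. by apply: big_pred0 => s; apply/negP => /forallP/(_ ord0); rewrite is_lrm_ord0. Qed.

Lemma WS n k : (k <= n)%N -> W theta n.+1 k = n%:R * W theta n k + theta * nolrm_sum n k.
Proof.
move=> le_kn; rewrite /W sum_lrm_split_last.
under eq_bigr => v _ do under eq_bigl => t do rewrite winnable_lift_last_lt //=.
rewrite sumr_const card_ord mulr_natl; congr (_ + theta * _).
by apply: eq_bigl => t; rewrite winnable_lift_last_max.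
Qed.

Lemma W_diag k : W theta k k = 0.
Proof.
apply: big_pred0 => s; apply/existsP => -[j /and4P[le_kj _ _ _]].
by move: (leq_trans (ltn_ord j) le_kj); rewrite ltnn.
Qed.

Lemma nolrm_sum_closed m d :
  nolrm_sum (m.+1 + d) m.+1 * m`!%:R = rising theta m.+1 * (m + d)`!%:R.
Proof.
elim: d => [|d IHd]; first by rewrite !addn0 nolrm_sum_diag lrm_sum_rising.
rewrite addnS nolrm_sumS ?leq_addr // -mulrA IHd addnS factS natrM addSn.
ring.
Qed.

Lemma W_closed m d :
  W theta (m.+1 + d) m.+1 * m`!%:R =
  theta * rising theta m.+1 * (m + d)`!%:R * \sum_(m.+1 <= i < m.+1 + d) i%:R^-1.
Proof.
elim: d => [|d IHd]; first by rewrite !addn0 W_diag big_geq // !mul0r mulr0.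
rewrite addnS WS ?leq_addr // mulrDl -mulrA IHd.
rewrite -[theta * nolrm_sum _ _ * _]mulrA nolrm_sum_closed.
rewrite [in RHS]big_nat_recr ?leq_addr //= addnS factS natrM addSn.
by field; rewrite -natrD nat1r pnatr_eq0.
Qed.

Lemma W_0 n : W theta n.+1 0 = n`!%:R * theta.
Proof.
elim: n => [|n IHn].
  by rewrite WS // nolrm_sum_diag lrm_sum_rising /rising big_ord0 mul0r add0r mulr1 mul1r.
by rewrite WS // IHn nolrm_sum_0 mulr0 addr0 factS natrM mulrA.
Qed.

End Recurrences.

Theorem theorem5p1 (R : numFieldType) (theta : R) :
  (forall N : nat, (1 <= N)%N -> W theta N 0 = (N.-1)`!%:R * theta) /\
  (forall N k : nat, (2 <= N)%N -> (1 <= k)%N -> (k <= N.-1)%N ->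
     W theta N k =
       theta * rising theta k * ((N.-1)`!%:R / (k.-1)`!%:R) *
       \sum_(k <= i < N) (i%:R)^-1).
Proof.
split; first by case=> [|n] // _; rewrite W_0.
move=> N [|m] // _ _ le_kN.
have -> : N = (m.+1 + (N - m.+1))%N by rewrite subnKC // (leq_trans le_kN) ?leq_pred.
have fact_neq0 : m`!%:R != 0 :> R by rewrite pnatr_eq0 -lt0n fact_gt0.
apply: (mulIf fact_neq0); rewrite W_closed addSn /=.
by field.
Qed.
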